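(* For each integer $s\ge 2$, $m(K_{1,1,1,s})=3$.
   Context: All graphs are finite, simple and undirected. A list assignment $L$ for a graph $G$ assigns to each vertex $v$ a set $L(v)$ of colors; an $L$-coloring is a proper vertex coloring $c$ of $G$ with $c(v)\in L(v)$ for every vertex $v$. A $k$-list assignment is a list assignment with $|L(v)|=k$ for all $v$. $G$ is uniquely $k$-list colorable (U$k$LC) if there exists a $k$-list assignment $L$ such that $G$ has exactly one $L$-coloring. $G$ has property $M(k)$ if it is not U$k$LC, i.e. for every $k$-list assignment $L$, $G$ has either no $L$-coloring or at least two $L$-colorings. The m-number $m(G)$ is the least integer $k\ge 1$ such that $G$ has property $M(k)$. $K_{n_1,\dots,n_r}$ denotes the complete $r$-partite graph with parts of sizes $n_1,\dots,n_r$. *)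

From mathcomp Require Import all_boot.
Set Implicit Arguments. Unset Strict Implicit. Unset Printing Implicit Defensive.

(* A graph is given by a finite vertex type T and an edge relation e : rel T
   (assumed symmetric and irreflexive where relevant). *)

Definition k_list_assignment (T : finType) (L : T -> seq nat) (k : nat) : Prop :=
  forall v, uniq (L v) /\ size (L v) = k.

Definition L_coloring (T : finType) (e : rel T) (L : T -> seq nat) (c : T -> nat) : Prop :=
  (forall v, c v \in L v) /\ (forall u v, e u v -> c u != c v).

Definition unique_L_coloring (T : finType) (e : rel T) (L : T -> seq nat) : Prop :=
  exists c, L_coloring e L c /\ forall c', L_coloring e L c' -> forall v, c' v = c v.

Definition UkLC (T : finType) (e : rel T) (k : nat) : Prop :=
  exists L, k_list_assignment L k /\ unique_L_coloring e L.

Definition property_M (T : finType) (e : rel T) (k : nat) : Prop := ~ UkLC e k.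

Definition m_number_is (T : finType) (e : rel T) (k : nat) : Prop :=
  1 <= k /\ property_M e k /\ forall j, 1 <= j < k -> ~ property_M e j.

(* Complete r-partite graph with part sizes n 0, ..., n (r-1): vertices are
   pairs (i, a) with a < n i; two vertices adjacent iff in different parts. *)
Definition cmp_vertex (r : nat) (n : 'I_r -> nat) : finType :=
  {i : 'I_r & 'I_(n i)}.

Arguments cmp_vertex : clear implicits.
Definition cmp_edge (r : nat) (n : 'I_r -> nat) : rel (cmp_vertex r n) :=
  fun x y => tag x != tag y.

Definition parts_111s (s : nat) : 'I_4 -> nat :=
  fun i => nth 0 [:: 1; 1; 1; s] i.

Definition K111s_edge (s : nat) : rel (cmp_vertex 4 (parts_111s s)) :=
  @cmp_edge 4 (parts_111s s).
Arguments cmp_edge : clear implicits.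
Arguments K111s_edge : clear implicits.

From mathcomp Require Import all_boot.
From mathcomp Require Import zify.

Set Implicit Arguments.
Unset Strict Implicit.
Unset Printing Implicit Defensive.

(* Coloring each vertex by its part, resp. the 2-lists [K111s_lists2], shows
   that K_{1,1,1,s} is uniquely 1- and 2-list colorable.  Now let c be the only
   L-coloring for a 3-list assignment L, and P the colors of the triangle.
   Recoloring one outer vertex shows that each outer list consists of its own
   color (outside P) and two colors of P.  A case analysis on the digraph in
   which a triangle vertex points to another when its list contains the other's
   color (transpose a 2-cycle, rotate a 3-cycle, or else give colors outside P
   to a sink and to a vertex not pointing to the third one) yields a new
   coloring of the triangle that does not use exactly two colors of P.  An
   outer list with no color left would be a permutation of the three new
   colors, hence contain exactly two colors of P; so the new coloring extends
   to the outer vertices, contradicting uniqueness. *)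

Lemma uniq_exists_notin (T : eqType) (s t : seq T) :
  uniq s -> size t < size s -> exists2 x, x \in s & x \notin t.
Proof.
move=> s_uniq lt_ts; apply/hasP; apply: contraTT lt_ts => /hasPn s_sub_t.
by rewrite -leqNgt uniq_leq_size // => x /s_sub_t; rewrite negbK.
Qed.

Definition triangle_recoloring (La Lb Lc : seq nat) (p q r x y z : nat) : Prop :=
  [/\ x \in La, y \in Lb, z \in Lc, uniq [:: x; y; z] & [|| x != p, y != q | z != r]].

Definition triangle_flexible (La Lb Lc : seq nat) (p q r : nat) : Prop :=
  exists x y z, triangle_recoloring La Lb Lc p q r x y z /\
                count (mem [:: p; q; r]) [:: x; y; z] != 2.

Lemma count_perm_mem (T : eqType) (P P' s s' : seq T) :
  perm_eq P P' -> perm_eq s s' -> count (mem P) s = count (mem P') s'.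
Proof.
move=> pP ps; rewrite (permP ps); apply: eq_count => w.
by rewrite /= (perm_mem pP).
Qed.

Lemma triangle_flexible_swap23 La Lb Lc p q r :
  triangle_flexible La Lc Lb p r q -> triangle_flexible La Lb Lc p q r.
Proof.
have swap23 (w1 w2 w3 : nat) : perm_eq [:: w1; w3; w2] [:: w1; w2; w3].
  by rewrite perm_cons -(perm_rot 1).
case=> x [z [y [[xa zc yb u n] k]]]; exists x, y, z; split; last first.
  by rewrite -(count_perm_mem (swap23 p q r) (swap23 x y z)).
split=> //; first by rewrite -(perm_uniq (swap23 x y z)).
by case/or3P: n => ->; rewrite ?orbT.
Qed.

Lemma triangle_flexible_rot La Lb Lc p q r :
  triangle_flexible Lb Lc La q r p -> triangle_flexible La Lb Lc p q r.
Proof.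
have rot1 (w1 w2 w3 : nat) : perm_eq [:: w2; w3; w1] [:: w1; w2; w3].
  by rewrite -(perm_rot 2).
case=> y [z [x [[yb zc xa u n] k]]]; exists x, y, z; split; last first.
  by rewrite -(count_perm_mem (rot1 p q r) (rot1 x y z)).
split=> //; first by rewrite -(perm_uniq (rot1 x y z)).
by case/or3P: n => ->; rewrite ?orbT.
Qed.

Section TriangleRecolorings.
Variables (La Lb Lc : seq nat) (p q r : nat).
Hypotheses (p_neq_q : p != q) (q_neq_r : q != r) (p_neq_r : p != r).

Lemma triangle_flexible_transpose :
  q \in La -> p \in Lb -> r \in Lc -> triangle_flexible La Lb Lc p q r.
Proof.
move=> qa pb rc; exists q, p, r; split; first split=> //.
- by rewrite /= !inE negb_or eq_sym p_neq_q q_neq_r p_neq_r.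
- by rewrite eq_sym p_neq_q.
- by rewrite /= !inE !eqxx !orbT.
Qed.

Lemma triangle_flexible_rotate :
  q \in La -> r \in Lb -> p \in Lc -> triangle_flexible La Lb Lc p q r.
Proof.
move=> qa rb pc; exists q, r, p; split; first split=> //.
- by rewrite /= !inE negb_or q_neq_r eq_sym p_neq_q eq_sym p_neq_r.
- by rewrite eq_sym p_neq_q.
- by rewrite /= !inE !eqxx !orbT.
Qed.

End TriangleRecolorings.

Lemma triangle_flexible_sink La Lb Lc p q r :
  uniq La -> size La = 3 -> uniq Lb -> size Lb = 3 -> r \in Lc ->
  q \notin La -> r \notin La -> r \notin Lb -> triangle_flexible La Lb Lc p q r.
Proof.
move=> ua sa ub sb rc qa ra rb.
have [y yb] : exists2 y, y \in Lb & y \notin [:: q; p].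
  by apply: uniq_exists_notin; rewrite ?sb.
rewrite !inE negb_or => /andP[y_neq_q y_neq_p].
have [x xa] : exists2 x, x \in La & x \notin [:: p; y].
  by apply: uniq_exists_notin; rewrite ?sa.
rewrite !inE negb_or => /andP[x_neq_p x_neq_y].
have x_neq_q : x != q by apply: contraNneq qa => <-.
have x_neq_r : x != r by apply: contraNneq ra => <-.
have y_neq_r : y != r by apply: contraNneq rb => <-.
exists x, y, r; split; first split=> //.
- by rewrite /= !inE negb_or x_neq_y x_neq_r y_neq_r.
- by rewrite x_neq_p.
- by rewrite /= !inE !eqxx !orbT (negbTE x_neq_p) (negbTE x_neq_q) (negbTE x_neq_r)
    (negbTE y_neq_p) (negbTE y_neq_q) (negbTE y_neq_r).
Qed.

Lemma triangle_flexible_lists La Lb Lc p q r :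
  uniq La -> size La = 3 -> uniq Lb -> size Lb = 3 -> uniq Lc -> size Lc = 3 ->
  p \in La -> q \in Lb -> r \in Lc -> uniq [:: p; q; r] ->
  triangle_flexible La Lb Lc p q r.
Proof.
move=> ua sa ub sb uc sc pa qb rc.
(* Each leaf is one of the three basic cases, up to a relabelling of the triangle. *)
rewrite /= !inE negb_or -andbA => /and4P[p_neq_q p_neq_r q_neq_r _].
have q_neq_p : q != p by rewrite eq_sym.
have r_neq_p : r != p by rewrite eq_sym.
have r_neq_q : r != q by rewrite eq_sym.
have [qa|qa] := boolP (q \in La).
  have [pb|pb] := boolP (p \in Lb); first exact: triangle_flexible_transpose.
  have [rb|rb] := boolP (r \in Lb).
    have [pc|pc] := boolP (p \in Lc); first exact: triangle_flexible_rotate.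
    have [qc|qc] := boolP (q \in Lc).
      by apply: triangle_flexible_rot; apply: triangle_flexible_transpose.
    apply/triangle_flexible_rot/triangle_flexible_rot/triangle_flexible_swap23.
    exact: triangle_flexible_sink.
  have [ra|ra] := boolP (r \in La).
    have [pc|pc] := boolP (p \in Lc).
      by apply: triangle_flexible_swap23; apply: triangle_flexible_transpose.
    by apply: triangle_flexible_rot; apply: triangle_flexible_sink.
  apply/triangle_flexible_rot/triangle_flexible_swap23.
  exact: triangle_flexible_sink.
have [ra|ra] := boolP (r \in La).
  have [pc|pc] := boolP (p \in Lc).
    by apply: triangle_flexible_swap23; apply: triangle_flexible_transpose.
  have [qc|qc] := boolP (q \in Lc).
    have [rb|rb] := boolP (r \in Lb).
      by apply: triangle_flexible_rot; apply: triangle_flexible_transpose.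
    have [pb|pb] := boolP (p \in Lb).
      by apply: triangle_flexible_swap23; apply: triangle_flexible_rotate.
    by apply: triangle_flexible_rot; apply: triangle_flexible_sink.
  apply/triangle_flexible_rot/triangle_flexible_rot.
  exact: triangle_flexible_sink.
have [rb|rb] := boolP (r \in Lb); last exact: triangle_flexible_sink.
have [qc|qc] := boolP (q \in Lc).
  by apply: triangle_flexible_rot; apply: triangle_flexible_transpose.
by apply: triangle_flexible_swap23; apply: triangle_flexible_sink.
Qed.

Lemma count_mem_all_but_one (T : eqType) (P l : seq T) u :
  uniq l -> u \in l -> u \notin P -> {in l, forall w, w != u -> w \in P} ->
  (count (mem P) l).+1 = size l.
Proof.
move=> l_uniq ul uP l_sub; rewrite -(count_predC (mem P)) -addn1; congr (_ + _).
suff -> : count (predC (mem P)) l = count_mem u l by rewrite count_uniq_mem ?ul.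
apply: eq_in_count => w wl /=; have [->|w_neq_u] := eqVneq w u; first by rewrite uP.
by rewrite (l_sub w wl w_neq_u).
Qed.

Lemma has_notin_of_count (T : eqType) (P l s : seq T) :
  uniq l -> uniq s -> size s = size l -> count (mem P) s != count (mem P) l ->
  has (fun w => w \notin s) l.
Proof.
move=> l_uniq s_uniq size_sl; apply: contraNT => /hasPn l_sub_s.
have [_ eq_ls] := uniq_min_size l_uniq (fun w wl => negbNE (l_sub_s w wl)) (eq_leq size_sl).
by rewrite (permP (uniq_perm s_uniq l_uniq (fun w => esym (eq_ls w)))).
Qed.

Lemma UkLC1_of_proper (T : finType) (e : rel T) (c : T -> nat) :
  (forall u v, e u v -> c u != c v) -> UkLC e 1.
Proof.
move=> c_proper; exists (fun v => [:: c v]); split; first by [].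
exists c; split; first by split=> // v; rewrite inE.
by move=> c' [c'L _] v; apply/eqP; rewrite -mem_seq1 c'L.
Qed.

Section UniqueColoring.
Variables (T : finType) (e : rel T) (L : T -> seq nat) (c : T -> nat).
Hypotheses (e_sym : symmetric e) (c_col : L_coloring e L c).
Hypothesis c_unique : forall c', L_coloring e L c' -> forall v, c' v = c v.

Lemma recolor_vertex_coloring v x :
  x \in L v -> (forall u, e v u -> c u != x) ->
  L_coloring e L (fun u => if u == v then x else c u).
Proof.
move=> xL x_free; split=> [u | u w uw]; first by case: eqP => [->|_]; last exact: c_col.1.
case: (eqVneq u v) => [eq_uv|_]; case: (eqVneq w v) => [eq_wv|_]; subst.
- by have := c_col.2 v v uw; rewrite eqxx.
- by rewrite eq_sym x_free.
- by apply: x_free; rewrite e_sym.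
- exact: c_col.2.
Qed.

Lemma unique_coloring_saturated v x :
  x \in L v -> x != c v -> exists2 u, e v u & c u = x.
Proof.
move=> xL x_neq_cv.
have [/existsP[u /andP[vu /eqP cu]]|no_u] := boolP [exists u, e v u && (c u == x)].
  by exists u.
have x_free u : e v u -> c u != x.
  by move=> vu; apply: contraNneq no_u => cu; apply/existsP; exists u; rewrite vu cu eqxx.
have := c_unique (recolor_vertex_coloring xL x_free) v.
by rewrite eqxx => x_eq_cv; rewrite x_eq_cv eqxx in x_neq_cv.
Qed.

End UniqueColoring.

Lemma cmp_vertex_singleton r (n : 'I_r -> nat) (u v : cmp_vertex r n) :
  tag u = tag v -> n (tag u) = 1 -> u = v.
Proof.
case: u v => [i a] [j b] /= eq_ij; subst j => n1.
suff -> : b = a by [].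
by apply: val_inj => /=; have := ltn_ord a; have := ltn_ord b; lia.
Qed.

Section K111s.
Variable s : nat.
Local Notation T := (cmp_vertex 4 (parts_111s s)).
Local Notation e := (K111s_edge s).

Definition part (v : T) : nat := tag v.

Definition v0 : T := existT (fun i => 'I_(parts_111s s i)) (@Ordinal 4 0 isT) ord0.
Definition v1 : T := existT (fun i => 'I_(parts_111s s i)) (@Ordinal 4 1 isT) ord0.
Definition v2 : T := existT (fun i => 'I_(parts_111s s i)) (@Ordinal 4 2 isT) ord0.

Lemma K111s_edgeE u v : e u v = (part u != part v).
Proof. by []. Qed.

Lemma K111s_vertexP v : [\/ v = v0, v = v1, v = v2 | part v = 3].
Proof.
have : part v < 4 by exact: ltn_ord.
case def_v: (part v) => [|[|[|[|k]]]] // _;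
  [apply: Or41 | apply: Or42 | apply: Or43 | by apply: Or44].
all: apply: cmp_vertex_singleton; first by apply: val_inj.
all: by rewrite /parts_111s -/(part v) def_v.
Qed.

Definition color_by_part (x y z : nat) (g : T -> nat) (v : T) : nat :=
  match part v with 0 => x | 1 => y | 2 => z | _ => g v end.

Lemma color_by_part_proper x y z g :
  uniq [:: x; y; z] -> (forall d, part d = 3 -> g d \notin [:: x; y; z]) ->
  forall u v, e u v -> color_by_part x y z g u != color_by_part x y z g v.
Proof.
rewrite /= !inE negb_or -andbA => /and4P[x_neq_y x_neq_z y_neq_z _] g_free u v.
rewrite K111s_edgeE /color_by_part.
have : part u < 4 by exact: ltn_ord. have : part v < 4 by exact: ltn_ord.
case def_u: (part u) => [|[|[|[|k]]]]; case def_v: (part v) => [|[|[|[|k']]]] //.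
all: try move: (g_free u def_u); try move: (g_free v def_v).
all: rewrite ?inE; lia.
Qed.

Definition K111s_lists2 (v : T) : seq nat :=
  match part v with
  | 0 => [:: 0; 1] | 1 => [:: 0; 2] | 2 => [:: 0; 3]
  | _ => [:: 0; if val (tagged v) == 0 then 1 else 2]
  end.

Lemma K111s_U2LC : 1 < s -> UkLC e 2.
Proof.
move=> s_gt1.
pose d0 : T := existT (fun i => 'I_(parts_111s s i)) (@Ordinal 4 3 isT) (Ordinal (ltnW s_gt1)).
pose d1 : T := existT (fun i => 'I_(parts_111s s i)) (@Ordinal 4 3 isT) (Ordinal s_gt1).
exists K111s_lists2; split.
  by move=> v; rewrite /K111s_lists2; case: (part v) => [|[|[|[|k]]]] //; case: ifP.
exists (color_by_part 1 2 3 (fun=> 0)); split; first split.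
- by move=> v; rewrite /K111s_lists2 /color_by_part; case: (part v) => [|[|[|[|k]]]].
- exact: color_by_part_proper.
move=> c [cL c_proper].
(* [d0] and [d1] forbid color 0 on the triangle. *)
have [c0 c1 c2] : [/\ c v0 = 1, c v1 = 2 & c v2 = 3].
  have := cL v0; have := cL v1; have := cL v2; have := cL d0; have := cL d1.
  have := c_proper v0 v1 isT; have := c_proper v0 v2 isT; have := c_proper v1 v2 isT.
  have := c_proper d0 v0 isT; have := c_proper d0 v1 isT; have := c_proper d0 v2 isT.
  have := c_proper d1 v0 isT; have := c_proper d1 v1 isT; have := c_proper d1 v2 isT.
  rewrite /K111s_lists2 /= !inE => *; split; lia.
move=> v; case: (K111s_vertexP v) => [->|->|->|dv] //.
have := cL v; have := c_proper v v0; have := c_proper v v1; have := c_proper v v2.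
rewrite /K111s_lists2 /color_by_part !K111s_edgeE dv c0 c1 c2 /=.
by case: ifP; rewrite !inE; lia.
Qed.

Lemma K111s_not_U3LC : ~ UkLC e 3.
Proof.
case=> L [L3 [c [c_col c_unique]]].
have e_sym : symmetric e by move=> u v; rewrite !K111s_edgeE eq_sym.
have [ua sa] := L3 v0; have [ub sb] := L3 v1; have [uc sc] := L3 v2.
set P := [:: c v0; c v1; c v2].
have P_uniq : uniq P.
  by rewrite /= !inE negb_or (c_col.2 v0 v1) ?(c_col.2 v0 v2) ?(c_col.2 v1 v2).
have cd_notin d : part d = 3 -> c d \notin P.
  move=> dd; rewrite !inE !negb_or; apply/and3P.
  by split; apply: c_col.2; rewrite K111s_edgeE dd.
have L_sat d : part d = 3 -> {in L d, forall w, w != c d -> w \in P}.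
  move=> dd w wL w_neq_cd.
  have [u du <-] := unique_coloring_saturated e_sym c_col c_unique wL w_neq_cd.
  case: (K111s_vertexP u) => [->|->|->|uu]; rewrite ?inE ?eqxx ?orbT //.
  by rewrite K111s_edgeE dd uu in du.
have [x [y [z [[xa yb zc xyz_uniq xyz_new] count_ne2]]]] :=
  triangle_flexible_lists ua sa ub sb uc sc (c_col.1 v0) (c_col.1 v1) (c_col.1 v2) P_uniq.
have free d : part d = 3 -> has (fun w => w \notin [:: x; y; z]) (L d).
  move=> dd; have [ud sd] := L3 d.
  apply: (has_notin_of_count (P := P) ud xyz_uniq); first by rewrite sd.
  have := count_mem_all_but_one ud (c_col.1 d) (cd_notin d dd) (L_sat d dd).
  by rewrite sd => -[->].
pose g d := nth 0 (L d) (find (fun w => w \notin [:: x; y; z]) (L d)).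
have g_free d : part d = 3 -> g d \in L d /\ g d \notin [:: x; y; z].
  move=> dd; have has_free := free d dd; split; last exact: (nth_find 0 has_free).
  by apply: mem_nth; rewrite -has_find.
have c'_col : L_coloring e L (color_by_part x y z g).
  split; last by apply: color_by_part_proper => // d /g_free[].
  move=> v; case: (K111s_vertexP v) => [->|->|->|dv] //.
  by rewrite /color_by_part dv; case: (g_free v dv).
have c'_eq_c := c_unique _ c'_col.
by move: xyz_new; rewrite -(c'_eq_c v0) -(c'_eq_c v1) -(c'_eq_c v2) !eqxx.
Qed.

End K111s.

Theorem proposition3p6 (s : nat) : 2 <= s -> m_number_is (K111s_edge s) 3.
Proof.
move=> s_ge2; split=> //; split; first exact: K111s_not_U3LC.
move=> j /andP[j_ge1 j_lt3] not_UkLC; apply: not_UkLC.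
have [->|->] : j = 1 \/ j = 2 by lia.
- by apply: (@UkLC1_of_proper _ _ (@part s)) => u v; rewrite K111s_edgeE.
- exact: K111s_U2LC.
Qed.
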